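(* Let $Z\subseteq\Sigma^{\mathbb Z}$ be a sofic shift, $f:\mathbb R^n\times Z\to\mathbb R^n$, $(C_1,\dots,C_K)$ a graph-induced covering of $Z$ with presentation $\mathcal G=(S,E)$, $S=\{s_1,\dots,s_K\}$, and let $W:\mathbb R^n\times\{1,\dots,K\}\to\mathbb R$ be a $\mathcal G$-based Lyapunov function for the system $x(k+1)=f(x(k),\sigma^k(\bar z))$. Then the functions $\mathcal V_{\min},\mathcal V_{\max}:\mathbb R^n\times Z\to\mathbb R$, $$\mathcal V_{\min}(x,\bar z)=\min_{j:\ \bar z\in C_j}W(x,j),\qquad \mathcal V_{\max}(x,\bar z)=\max_{j:\ \bar z\in C_j}W(x,j),$$ are both sequence-dependent Lyapunov functions for this system.
   Context: $\Sigma$ nonempty countable alphabet; $\Sigma^{\mathbb Z}$ bi-infinite sequences $\bar z=(z_k)_{k\in\mathbb Z}$; $\sigma(\bar z)_k=z_{k+1}$. A labeled graph is $\mathcal G=(S,E)$, $S$ finite, $E\subseteq S\times S\times\Sigma$; standing assumption: every node has at least one incoming and one outgoing edge. A bi-infinite walk labeled by $\bar z$ is $(e_k)_{k\in\mathbb Z}$, $e_k=(s_k,s_{k+1},z_k)\in E$, starting at $s_0$. $\mathcal Z(\mathcal G)$ / $\mathcal Z(\mathcal G,s)$: labels of all bi-infinite walks / those starting at $s$. Sofic shift: a set $\mathcal Z(\mathcal G)$. Graph-induced covering of $Z$ with presentation $\mathcal G$: a family $(C_1,\dots,C_K)$ with $\mathcal G$ having nodes $s_1,\dots,s_K$, $\mathcal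 Z(\mathcal G)=Z$, $C_j=\mathcal Z(\mathcal G,s_j)$. $\mathcal K_\infty$: continuous strictly increasing unbounded $\alpha:\mathbb R_{\ge0}\to\mathbb R_{\ge0}$ with $\alpha(0)=0$. A $\mathcal G$-based Lyapunov function is $W:\mathbb R^n\times\{1,\dots,K\}\to\mathbb R$ such that there exist $\alpha_1,\alpha_2\in\mathcal K_\infty$, $\gamma\in[0,1)$ with $\alpha_1(|x|)\le W(x,j)\le\alpha_2(|x|)$ for all $x,j$, and $W(f(x,\bar z),l)\le\gamma W(x,j)$ for all $x\in\mathbb R^n$, all edges $(s_j,s_l,i)\in E$ and all $\bar z\in C_j$ with $z_0=i$ and $\sigma(\bar z)\in C_l$. A sequence-dependent Lyapunov function is $\mathcal V:\mathbb R^n\times Z\to\mathbb R$ such that there exist $\alpha_1,\alpha_2\in\mathcal K_\infty$, $\gamma\in[0,1)$ with $\alpha_1(|x|)\le\mathcal V(x,\bar z)\le\alpha_2(|x|)$ and $\mathcal V(f(x,\bar z),\sigma(\bar z))\le\gamma\mathcal V(x,\bar z)$ for all $x\in\mathbb R^n,\bar z\in Z$. *)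

From mathcomp Require Import all_boot all_order all_algebra.
From mathcomp Require Import all_classical all_reals all_analysis.
Set Implicit Arguments. Unset Strict Implicit. Unset Printing Implicit Defensive.
Import Order.TTheory GRing.Theory Num.Theory.
Import numFieldNormedType.Exports.
Local Open Scope classical_set_scope.
Local Open Scope ring_scope.

Definition enorm {R : realType} {n : nat} (x : 'rV[R]_n) : R :=
  Num.sqrt (\sum_(i < n) x ord0 i ^+ 2).

(* Class K_infinity, for functions defined on R_{>=0} (values off R_{>=0} irrelevant). *)
Definition Kinf {R : realType} (a : R -> R) : Prop :=
  {within [set x : R | 0 <= x], continuous a} /\ a 0 = 0 /\
  (forall x, 0 <= x -> 0 <= a x) /\
  (forall x y, 0 <= x -> x < y -> a x < a y) /\
  (forall M, exists x, 0 <= x /\ M <= a x).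

Definition shift {Sigma : Type} (z : int -> Sigma) : int -> Sigma :=
  fun k => z (k + 1).

(* A labeled graph with node set S = 'I_K (node j is s_{j+1}) and edge
   relation E i l a  <->  (s_i, s_l, a) \in E. *)
Definition graph_ok {Sigma : Type} {K : nat} (E : 'I_K -> 'I_K -> Sigma -> Prop) :=
  forall j, (exists i a, E i j a) /\ (exists l a, E j l a).

Definition walk {Sigma : Type} {K : nat} (E : 'I_K -> 'I_K -> Sigma -> Prop)
  (z : int -> Sigma) (s : int -> 'I_K) : Prop :=
  forall k, E (s k) (s (k + 1)) (z k).

Definition ZG {Sigma : Type} {K : nat} (E : 'I_K -> 'I_K -> Sigma -> Prop)
  : set (int -> Sigma) := [set z | exists s, walk E z s].

Definition ZG_at {Sigma : Type} {K : nat} (E : 'I_K -> 'I_K -> Sigma -> Prop)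
  (j : 'I_K) : set (int -> Sigma) := [set z | exists s, walk E z s /\ s 0 = j].

Definition graph_induced_covering {Sigma : Type} {K : nat}
  (E : 'I_K -> 'I_K -> Sigma -> Prop) (Z : set (int -> Sigma))
  (C : 'I_K -> set (int -> Sigma)) : Prop :=
  ZG E = Z /\ forall j, C j = ZG_at E j.

Definition G_Lyapunov {R : realType} {Sigma : Type} {n K : nat}
  (f : 'rV[R]_n -> (int -> Sigma) -> 'rV[R]_n)
  (E : 'I_K -> 'I_K -> Sigma -> Prop) (C : 'I_K -> set (int -> Sigma))
  (W : 'rV[R]_n -> 'I_K -> R) : Prop :=
  exists a1 a2 : R -> R, exists g : R,
    Kinf a1 /\ Kinf a2 /\ 0 <= g /\ g < 1 /\
    (forall x j, a1 (enorm x) <= W x j /\ W x j <= a2 (enorm x)) /\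
    (forall x j l i z, E j l i -> C j z -> z 0 = i -> C l (shift z) ->
       W (f x z) l <= g * W x j).

Definition seq_Lyapunov {R : realType} {Sigma : Type} {n : nat}
  (Z : set (int -> Sigma)) (f : 'rV[R]_n -> (int -> Sigma) -> 'rV[R]_n)
  (V : 'rV[R]_n -> (int -> Sigma) -> R) : Prop :=
  exists a1 a2 : R -> R, exists g : R,
    Kinf a1 /\ Kinf a2 /\ 0 <= g /\ g < 1 /\
    (forall x z, Z z -> a1 (enorm x) <= V x z /\ V x z <= a2 (enorm x)) /\
    (forall x z, Z z -> V (f x z) (shift z) <= g * V x z).

(* Minimum / maximum of a finite nonempty list (value 0 on the empty list,
   which never occurs for z \in Z). *)
Definition listmin {R : realType} (s : seq R) : R :=
  match s with [::] => 0 | a :: s' => foldr Num.min a s' end.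
Definition listmax {R : realType} (s : seq R) : R :=
  match s with [::] => 0 | a :: s' => foldr Num.max a s' end.

Definition active_vals {R : realType} {Sigma : Type} {n K : nat}
  (C : 'I_K -> set (int -> Sigma)) (W : 'rV[R]_n -> 'I_K -> R)
  (x : 'rV[R]_n) (z : int -> Sigma) : seq R :=
  [seq W x j | j <- [seq j <- enum 'I_K | `[< C j z >]]].

Definition Vmin {R : realType} {Sigma : Type} {n K : nat}
  (C : 'I_K -> set (int -> Sigma)) (W : 'rV[R]_n -> 'I_K -> R)
  (x : 'rV[R]_n) (z : int -> Sigma) : R := listmin (active_vals C W x z).
Definition Vmax {R : realType} {Sigma : Type} {n K : nat}
  (C : 'I_K -> set (int -> Sigma)) (W : 'rV[R]_n -> 'I_K -> R)
  (x : 'rV[R]_n) (z : int -> Sigma) : R := listmax (active_vals C W x z).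

From Pilot Require Import Defs.
From mathcomp Require Import all_boot all_order all_algebra.
From mathcomp Require Import all_classical all_reals all_analysis.
Set Implicit Arguments. Unset Strict Implicit. Unset Printing Implicit Defensive.
Import Order.TTheory GRing.Theory Num.Theory.
Local Open Scope classical_set_scope.
Local Open Scope ring_scope.

(* For z in Z let A(z) = {j | z \in C_j} be its set of active nodes; V_min and
   V_max are the minimum and maximum of W(x, .) over A(z).  The proof rests on
   two facts about a graph-induced covering:
   - A(z) is nonempty for z in Z, so the extremum is attained at some active
     node, and is bounded by the W-value at any other active node;
   - every active node of z has an outgoing edge labelled z_0 to an active node
     of shift z (forward step), and every active node of shift z has an incoming
     edge labelled z_0 from an active node of z (backward step): just move one
     step along the walk witnessing membership in C_j.
   The sandwich bounds of W pass to any value attained on A(z).  For the decrease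
   of V_min, start from the minimizing node j of z and step forward to l; for
   V_max, start from the maximizing node l of shift z and step backward to j. *)

Section ListExtrema.
Variable R : realType.

Lemma foldr_min_mem (a : R) (s : seq R) : foldr Num.min a s \in a :: s.
Proof.
elim: s => [|b s IH] /=; first by rewrite inE.
rewrite /Num.min; case: ifP => _; first by rewrite !inE eqxx orbT.
by move: IH; rewrite !inE => /orP[->|->]; rewrite ?orbT.
Qed.

Lemma foldr_max_mem (a : R) (s : seq R) : foldr Num.max a s \in a :: s.
Proof.
elim: s => [|b s IH] /=; first by rewrite inE.
rewrite /Num.max; case: ifP => _; last by rewrite !inE eqxx orbT.
by move: IH; rewrite !inE => /orP[->|->]; rewrite ?orbT.
Qed.

Lemma foldr_min_le (a : R) (s : seq R) y : y \in a :: s -> foldr Num.min a s <= y.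
Proof.
elim: s y => [|b s IH] y /=; first by rewrite inE => /eqP ->.
rewrite !inE => /or3P[/eqP->|/eqP->|Hy].
- by rewrite ge_min (IH a) ?orbT // inE eqxx.
- by rewrite ge_min lexx.
- by rewrite ge_min (IH y) ?orbT // inE Hy orbT.
Qed.

Lemma foldr_max_ge (a : R) (s : seq R) y : y \in a :: s -> y <= foldr Num.max a s.
Proof.
elim: s y => [|b s IH] y /=; first by rewrite inE => /eqP ->.
rewrite !inE => /or3P[/eqP->|/eqP->|Hy].
- by rewrite le_max (IH a) ?orbT // inE eqxx.
- by rewrite le_max lexx.
- by rewrite le_max (IH y) ?orbT // inE Hy orbT.
Qed.

Lemma listmin_mem (s : seq R) : s != [::] -> listmin s \in s.
Proof. by case: s => // a s _; apply: foldr_min_mem. Qed.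

Lemma listmax_mem (s : seq R) : s != [::] -> listmax s \in s.
Proof. by case: s => // a s _; apply: foldr_max_mem. Qed.

Lemma listmin_le (s : seq R) y : y \in s -> listmin s <= y.
Proof. by case: s => // a s; apply: foldr_min_le. Qed.

Lemma listmax_ge (s : seq R) y : y \in s -> y <= listmax s.
Proof. by case: s => // a s; apply: foldr_max_ge. Qed.

End ListExtrema.

Section ActiveExtrema.
Variables (R : realType) (Sigma : Type) (n K : nat).
Variables (C : 'I_K -> set (int -> Sigma)) (W : 'rV[R]_n -> 'I_K -> R).

Lemma active_mem x {z j} : C j z -> W x j \in active_vals C W x z.
Proof. by move=> Cj; apply: map_f; rewrite mem_filter mem_enum andbT; apply/asboolP. Qed.

Lemma active_inv x z y : y \in active_vals C W x z -> exists2 j, C j z & y = W x j.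
Proof. by move=> /mapP[j]; rewrite mem_filter => /andP[/asboolP Cj _] ->; exists j. Qed.

Lemma Vmin_le x {z j} : C j z -> Vmin C W x z <= W x j.
Proof. by move=> Cj; apply/listmin_le/active_mem. Qed.

Lemma Vmax_ge x {z j} : C j z -> W x j <= Vmax C W x z.
Proof. by move=> Cj; apply/listmax_ge/active_mem. Qed.

Lemma Vmin_attained x {z j0} : C j0 z -> exists2 j, C j z & Vmin C W x z = W x j.
Proof.
move=> Cj0; apply/active_inv/listmin_mem.
by apply/eqP => nil_vals; move: (active_mem x Cj0); rewrite nil_vals.
Qed.

Lemma Vmax_attained x {z j0} : C j0 z -> exists2 j, C j z & Vmax C W x z = W x j.
Proof.
move=> Cj0; apply/active_inv/listmax_mem.
by apply/eqP => nil_vals; move: (active_mem x Cj0); rewrite nil_vals.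
Qed.

End ActiveExtrema.
Arguments Vmin_le {R Sigma n K C} W x {z j}.
Arguments Vmax_ge {R Sigma n K C} W x {z j}.
Arguments Vmin_attained {R Sigma n K C} W x {z j0}.
Arguments Vmax_attained {R Sigma n K C} W x {z j0}.

Section Covering.
Variables (Sigma : Type) (K : nat) (E : 'I_K -> 'I_K -> Sigma -> Prop).
Variables (Z : set (int -> Sigma)) (C : 'I_K -> set (int -> Sigma)).
Hypothesis cover : graph_induced_covering E Z C.

Lemma covering_active z : Z z -> exists j, C j z.
Proof.
case: cover => <- HC [s walk_s]; exists (s 0).
by rewrite HC; exists s.
Qed.

Lemma covering_shift z : Z z -> Z (Defs.shift z).
Proof.
case: cover => <- _ [s walk_s].
by exists (fun k => s (k + 1)) => k; apply: walk_s.
Qed.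

Lemma covering_forward j z : C j z -> exists2 l, E j l (z 0) & C l (Defs.shift z).
Proof.
case: cover => _ HC; rewrite HC => -[s [walk_s s0]].
exists (s 1); first by move: (walk_s 0); rewrite s0 add0r.
rewrite HC; exists (fun k => s (k + 1)); split; last by rewrite add0r.
by move=> k; apply: walk_s.
Qed.

Lemma covering_backward l z : C l (Defs.shift z) -> exists2 j, E j l (z 0) & C j z.
Proof.
case: cover => _ HC; rewrite HC => -[s [walk_s s0]].
exists (s (-1)); first by move: (walk_s (-1)); rewrite /Defs.shift addNr s0.
rewrite HC; exists (fun k => s (k - 1)); split; last by rewrite add0r.
by move=> k; rewrite addrK; move: (walk_s (k - 1)); rewrite /Defs.shift subrK.
Qed.

End Covering.

Section SequenceLyapunov.
Variables (R : realType) (Sigma : Type) (n K : nat).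
Variables (E : 'I_K -> 'I_K -> Sigma -> Prop) (Z : set (int -> Sigma)).
Variables (f : 'rV[R]_n -> (int -> Sigma) -> 'rV[R]_n).
Variables (C : 'I_K -> set (int -> Sigma)) (W : 'rV[R]_n -> 'I_K -> R).
Hypothesis cover : graph_induced_covering E Z C.
Variables (a1 a2 : R -> R) (g : R).
Hypothesis W_bounds : forall x j, a1 (enorm x) <= W x j /\ W x j <= a2 (enorm x).
Hypothesis W_decrease : forall x j l i z,
  E j l i -> C j z -> z 0 = i -> C l (Defs.shift z) -> W (f x z) l <= g * W x j.
Hypothesis g_ge0 : 0 <= g.

(* Both extrema are values W(x, j) at an active node, so inherit its bounds. *)
Lemma Vmin_bounds x z : Z z ->
  a1 (enorm x) <= Vmin C W x z /\ Vmin C W x z <= a2 (enorm x).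
Proof.
move=> /(covering_active cover)[j0 /(Vmin_attained W x)[j _ ->]].
exact: W_bounds.
Qed.

Lemma Vmax_bounds x z : Z z ->
  a1 (enorm x) <= Vmax C W x z /\ Vmax C W x z <= a2 (enorm x).
Proof.
move=> /(covering_active cover)[j0 /(Vmax_attained W x)[j _ ->]].
exact: W_bounds.
Qed.

(* Decrease of V_min: step forward from the node j minimizing W(x, .). *)
Lemma Vmin_decrease x z : Z z -> Vmin C W (f x z) (Defs.shift z) <= g * Vmin C W x z.
Proof.
move=> /(covering_active cover)[j0 /(Vmin_attained W x)[j Cj ->]].
have [l Ejl Cl] := covering_forward cover Cj.
exact: le_trans (Vmin_le W (f x z) Cl) (W_decrease x Ejl Cj erefl Cl).
Qed.

(* Decrease of V_max: step backward from the node l maximizing W(f x z, .). *)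
Lemma Vmax_decrease x z : Z z -> Vmax C W (f x z) (Defs.shift z) <= g * Vmax C W x z.
Proof.
move=> /(covering_shift cover)/(covering_active cover)[l0].
move=> /(Vmax_attained W (f x z))[l Cl ->].
have [j Ejl Cj] := covering_backward cover Cl.
apply: le_trans (W_decrease x Ejl Cj erefl Cl) _.
by rewrite ler_wpM2l // Vmax_ge.
Qed.

End SequenceLyapunov.

Theorem mainTheorem5 (R : realType) (Sigma : countType) (hSigma : inhabited Sigma)
  (n K : nat) (E : 'I_K -> 'I_K -> Sigma -> Prop) (hE : graph_ok E)
  (Z : set (int -> Sigma)) (f : 'rV[R]_n -> (int -> Sigma) -> 'rV[R]_n)
  (C : 'I_K -> set (int -> Sigma)) (W : 'rV[R]_n -> 'I_K -> R) :
  graph_induced_covering E Z C ->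
  G_Lyapunov f E C W ->
  seq_Lyapunov Z f (Vmin C W) /\ seq_Lyapunov Z f (Vmax C W).
Proof.
move=> cover [a1 [a2 [g [a1K [a2K [g_ge0 [g_lt1 [W_bounds W_decrease]]]]]]]].
split; exists a1, a2, g; do 4 (split => //); split => x z Zz.
- exact (Vmin_bounds cover W_bounds x Zz).
- exact (Vmin_decrease cover W_decrease x Zz).
- exact (Vmax_bounds cover W_bounds x Zz).
- exact (Vmax_decrease cover W_decrease g_ge0 x Zz).
Qed.
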